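(* Let $G,\sigma\ge0$ with $G+\sigma>0$, $\lambda>0$, $C_{\mathbf{x}}\ge0$, and $\varepsilon>0$ with $\varepsilon\le\frac72(G+\sigma)$. Set $\beta_\star=1-\left(\frac{\varepsilon}{7(G+\sigma)}\right)^2$, $D_\star=\frac14\lambda^{-1/2}\varepsilon^{1/2}\left(1+\frac{49(G+\sigma)^2}{\varepsilon^2}\sqrt{C_{\mathbf{x}}}\right)^{-1}$, $\mu_\star=2\lambda^{1/2}\varepsilon^{1/2}\left(1+\frac{49(G+\sigma)^2}{\varepsilon^2}\sqrt{C_{\mathbf{x}}}\right)$, $\eta_\star=\frac{2}{G+\sigma}D_\star\sqrt{1-\beta_\star}$ and $\zeta_\star=\frac{\beta_\star}{1+\eta_\star\mu_\star}$. Then $1-\zeta_\star=\Theta\!\left(\frac{\varepsilon^2}{(G+\sigma)^2}\right)$ (with absolute constants). Consequently, every $\kappa\in[\zeta_\star,1]$ satisfies $1-\Theta\!\left(\frac{\varepsilon^2}{(G+\sigma)^2}\right)\le\kappa\le1$, and the step size $\gamma=\frac{\eta_\star}{1-\zeta_\star}$ equals $\Theta\!\left(\frac{(G+\sigma)^2}{\varepsilon^2}\right)\cdot\eta_\star$.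
   Context: In the paper these are the parameters of the conversion scheme equivalent to schedule-free SGD, where $C_{\mathbf{x}}$ is the iterate stability factor of the run, $\kappa_t$ is drawn uniformly from $[\zeta_\star,1]$ and $\gamma$ is the step size of the base SGD trajectory. *)

From mathcomp Require Import all_boot all_order all_algebra.
Set Implicit Arguments. Unset Strict Implicit. Unset Printing Implicit Defensive.
Import Order.TTheory GRing.Theory Num.Theory.
Local Open Scope ring_scope.

Section Params.
Variable R : rcfType.
Variables (G sigma lam Cx eps : R).

Definition beta_star : R := 1 - (eps / (7 * (G + sigma))) ^+ 2.

Definition stab_factor : R := 1 + 49 * (G + sigma) ^+ 2 / eps ^+ 2 * Num.sqrt Cx.

Definition D_star : R := 4^-1 * (Num.sqrt lam)^-1 * Num.sqrt eps * stab_factor^-1.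

Definition mu_star : R := 2 * Num.sqrt lam * Num.sqrt eps * stab_factor.

Definition eta_star : R := 2 / (G + sigma) * D_star * Num.sqrt (1 - beta_star).

Definition zeta_star : R := beta_star / (1 + eta_star * mu_star).

Definition gamma_star : R := eta_star / (1 - zeta_star).
End Params.

From mathcomp Require Import all_boot all_order all_algebra.
From mathcomp Require Import ring lra.
Import Order.TTheory GRing.Theory Num.Theory.
Local Open Scope ring_scope.

(** With [t := eps / (7 (G + sigma))] one has [sqrt (1 - beta_star) = t], and in
    [eta_star * mu_star] the factors [sqrt lam] and [stab_factor] cancel, leaving
    [eta_star * mu_star = 7 t^2]. Hence, writing [r := eps^2 / (G + sigma)^2 = 49 t^2],
    [1 - zeta_star = 8 r / (49 + 7 r)] exactly, and the hypothesis
    [eps <= 7/2 (G + sigma)], i.e. [r <= 49/4], keeps the denominator between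
    [49] and [17 * 8]. *)

Section ParameterIdentities.
Variables (R : rcfType) (G sigma lam Cx eps : R).
Hypotheses (hS : 0 < G + sigma) (hlam : 0 < lam) (hCx : 0 <= Cx) (heps : 0 <= eps).

Lemma sqrt_one_sub_beta_star :
  Num.sqrt (1 - beta_star G sigma eps) = eps / (7 * (G + sigma)).
Proof.
rewrite /beta_star opprB addrC subrK sqrtr_sqr ger0_norm //.
by rewrite divr_ge0 // ltW // mulr_gt0.
Qed.

Lemma stab_factor_gt0 : 0 < stab_factor G sigma Cx eps.
Proof.
rewrite /stab_factor ltr_wpDr // mulr_ge0 ?sqrtr_ge0 //.
by rewrite divr_ge0 ?sqr_ge0 // mulr_ge0 ?sqr_ge0.
Qed.

Lemma eta_star_mul_mu_star :
  eta_star G sigma lam Cx eps * mu_star G sigma lam Cx eps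
  = eps ^+ 2 / (7 * (G + sigma) ^+ 2).
Proof.
rewrite /eta_star sqrt_one_sub_beta_star /D_star /mu_star.
have hF := stab_factor_gt0; have hl : 0 < Num.sqrt lam by rewrite sqrtr_gt0.
set F := stab_factor _ _ _ _; set b := Num.sqrt eps.
have -> : eps = b ^+ 2 by rewrite sqr_sqrtr.
by field; rewrite ?gt_eqF.
Qed.

Lemma one_sub_zeta_star (r := eps ^+ 2 / (G + sigma) ^+ 2) :
  1 - zeta_star G sigma lam Cx eps = 8 * r / (49 + 7 * r).
Proof.
have hS2 : 0 < (G + sigma) ^+ 2 by rewrite exprn_gt0.
have he2 : 0 <= eps ^+ 2 := sqr_ge0 eps.
rewrite /zeta_star eta_star_mul_mu_star /beta_star /r.
by field; rewrite !gt_eqF //; lra.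
Qed.

End ParameterIdentities.

Lemma rate_bounds (R : realFieldType) (r : R) :
  0 < r -> r <= 49 / 4 -> 17^-1 * r <= 8 * r / (49 + 7 * r) <= r.
Proof.
move=> hr0 hr; have hd : 0 < 49 + 7 * r by lra.
by apply/andP; split; [rewrite ler_pdivlMr // | rewrite ler_pdivrMr //]; nra.
Qed.

Lemma ratio_sqr_le (R : realFieldType) (a b c : R) :
  0 <= a -> 0 < b -> 0 <= c -> a <= c * b -> a ^+ 2 / b ^+ 2 <= c ^+ 2.
Proof.
move=> ha hb hc hab.
by rewrite -expr_div_n lerXn2r ?nnegrE ?divr_ge0 ?ler_pdivrMr // ltW.
Qed.

Theorem proposition3 :
  exists c1 c2 c3 c4 c5 : nat,
    (0 < c1)%N /\ (0 < c2)%N /\ (0 < c3)%N /\ (0 < c4)%N /\ (0 < c5)%N /\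
  forall (R : rcfType) (G sigma lam Cx eps : R),
    0 <= G -> 0 <= sigma -> 0 < G + sigma -> 0 < lam -> 0 <= Cx ->
    0 < eps -> eps <= 7 / 2 * (G + sigma) ->
    let r := eps ^+ 2 / (G + sigma) ^+ 2 in
    let zeta := zeta_star G sigma lam Cx eps in
    let eta := eta_star G sigma lam Cx eps in
    let gamma := gamma_star G sigma lam Cx eps in
    (* 1 - zeta_* = Theta(eps^2/(G+sigma)^2) *)
    (c1%:R^-1 * r <= 1 - zeta /\ 1 - zeta <= c2%:R * r) /\
    (* every kappa in [zeta_*, 1] satisfies 1 - Theta(r) <= kappa <= 1 *)
    (forall kappa : R, zeta <= kappa <= 1 ->
        1 - c5%:R * r <= kappa /\ kappa <= 1) /\
    (* gamma = Theta((G+sigma)^2/eps^2) * eta_* *)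
    (exists theta : R, gamma = theta * eta /\
        c3%:R^-1 * r^-1 <= theta /\ theta <= c4%:R * r^-1).
Proof.
exists 17%N, 1%N, 1%N, 17%N, 1%N; do 5 split => //.
move=> R G sigma lam Cx eps _ _ hS hlam hCx heps hle r zeta eta gamma.
have hr0 : 0 < r by rewrite divr_gt0 ?exprn_gt0.
have hr : r <= 49 / 4.
  have -> : 49 / 4 = (7 / 2) ^+ 2 :> R by field.
  by apply: ratio_sqr_le hle; lra.
have /andP[lo hi] : 17^-1 * r <= 1 - zeta <= r.
  by rewrite /zeta one_sub_zeta_star -/r ?rate_bounds // ltW.
clearbody r.
have hz : 0 < 1 - zeta by apply: lt_le_trans lo; rewrite mulr_gt0 ?invr_gt0.
rewrite invr1 !mul1r; split; [by [] | split].
- by move=> kappa /andP[hk ->]; split => //; lra.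
- exists (1 - zeta)^-1; split; first by rewrite /gamma /gamma_star mulrC.
  have -> : 17 * r^-1 = (17^-1 * r)^-1 by rewrite invfM invrK.
  by rewrite !lef_pV2 ?posrE ?mulr_gt0 ?invr_gt0.
Qed.
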